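(* Let $A$ be a $C^*$-algebra and let $J \subset A$ be a closed right ideal. If $J$ is topologically essential, then $J$ is essential.
   Context: A closed right ideal $J$ of a $C^*$-algebra $A$ is called topologically essential if for every nonzero closed right ideal $K \subset A$ one has $J \cap K \neq \{0\}$. It is called essential if for every nonzero right ideal $I \subset A$ (not necessarily closed; a right ideal here means a linear subspace $I$ with $IA \subset I$) one has $J \cap I \neq \{0\}$. *)

From mathcomp Require Import all_boot all_order all_algebra.
From mathcomp Require Import all_classical all_reals all_analysis.
From mathcomp Require Import complex.
Set Implicit Arguments. Unset Strict Implicit. Unset Printing Implicit Defensive.
Import Order.TTheory GRing.Theory Num.Theory.
Import numFieldNormedType.Exports.
Local Open Scope classical_set_scope.
Local Open Scope ring_scope.

Record is_cstar_algebra (R : realType) (A : completeNormedModType (complex R))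
    (mul : A -> A -> A) (star : A -> A) : Prop := {
  cs_mulA : forall x y z, mul x (mul y z) = mul (mul x y) z;
  cs_mulDl : forall x y z, mul (x + y) z = mul x z + mul y z;
  cs_mulDr : forall x y z, mul x (y + z) = mul x y + mul x z;
  cs_mulZl : forall (a : complex R) x y, mul (a *: x) y = a *: mul x y;
  cs_mulZr : forall (a : complex R) x y, mul x (a *: y) = a *: mul x y;
  cs_norm_mul : forall x y, `|mul x y| <= `|x| * `|y|;
  cs_starK : forall x, star (star x) = x;
  cs_starD : forall x y, star (x + y) = star x + star y;
  cs_starZ : forall (a : complex R) x, star (a *: x) = (a^*)%C *: star x;
  cs_starM : forall x y, star (mul x y) = mul (star y) (star x);
  cs_cstar : forall x, `|mul (star x) x| = `|x| ^+ 2 }.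

Definition right_ideal (R : realType) (A : completeNormedModType (complex R))
    (mul : A -> A -> A) (I : set A) : Prop :=
  I 0 /\ (forall x y, I x -> I y -> I (x + y)) /\
  (forall (a : complex R) x, I x -> I (a *: x)) /\
  (forall x a, I x -> I (mul x a)).

Definition closed_right_ideal (R : realType) (A : completeNormedModType (complex R))
    (mul : A -> A -> A) (I : set A) : Prop :=
  right_ideal mul I /\ closed I.

Definition nonzero_set (R : realType) (A : completeNormedModType (complex R))
  (I : set A) : Prop := exists x, I x /\ x <> 0.

Definition meets_nontrivially (R : realType) (A : completeNormedModType (complex R))
  (J K : set A) : Prop := exists x, J x /\ K x /\ x <> 0.

Definition topologically_essential (R : realType) (A : completeNormedModType (complex R))
    (mul : A -> A -> A) (J : set A) : Prop :=
  forall K : set A, closed_right_ideal mul K -> nonzero_set K -> meets_nontrivially J K.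

Definition essential (R : realType) (A : completeNormedModType (complex R))
    (mul : A -> A -> A) (J : set A) : Prop :=
  forall I : set A, right_ideal mul I -> nonzero_set I -> meets_nontrivially J I.

From mathcomp Require Import all_boot all_order all_algebra.
From mathcomp Require Import all_classical all_reals all_analysis.
From mathcomp Require Import complex.
From mathcomp Require Import ring lra.
Set Implicit Arguments. Unset Strict Implicit. Unset Printing Implicit Defensive.
Import Order.TTheory GRing.Theory Num.Theory.
Import numFieldNormedType.Exports.
Local Open Scope classical_set_scope.
Local Open Scope ring_scope.
Local Open Scope complex_scope.

(* A nonzero x in a right ideal I yields h = x x^* / |x x^*|, self-adjoint of
   norm 1 with h A in I. With p = h h, we find in h A an element e and a nonzero z
   with e z = z (in functional calculus, e = min(2p, 1) and z = 2 max(2p - 1, 0)).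
   Then K = {z | e z = z} is a nonzero closed right ideal, so it meets J, and
   K is contained in e A, hence in I. As A need not be unital and no functional
   calculus is available, e and z are built from elements 1 - sqrt(1 - v),
   ||v|| <= 1, obtained as limits of the iteration E |-> (v + E E) / 2. *)

Lemma cvg_dist_dominated {K : numFieldType} {V : normedModType K}
    {T} {F : set_system T} {FF : Filter F} (f g : T -> V) (x y : V) (M : K) :
  0 <= M -> g @ F --> x -> (\forall t \near F, `|y - f t| <= M * `|x - g t|) ->
  f @ F --> y.
Proof.
move=> M_ge0 gx fg; apply/cvgrPdist_lt => e e_gt0.
have M1_gt0 : 0 < M + 1 by rewrite ltr_wpDl.
move/cvgrPdist_lt: gx => /(_ _ (divr_gt0 e_gt0 M1_gt0)).
apply: filterS2 fg => t fgt gt; apply: le_lt_trans fgt _.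
apply: (@le_lt_trans _ _ ((M + 1) * `|x - g t|)); first by rewrite ler_wpM2r // lerDl.
by rewrite mulrC -ltr_pdivlMr.
Qed.

Lemma norm_cvgn_ub {K : numFieldType} {V : normedModType K} (u : nat -> V) l (c : K) :
  0 <= c -> u @ \oo --> l -> (forall n, `|u n| <= c) -> `|l| <= c.
Proof.
move=> c_ge0 ul uc; rewrite real_leNgt ?ger0_real //; apply/negP => lc.
have [n _ /(_ n (leqnn n))] := cvgr_norm_gt _ ul _ lc.
by move=> /lt_le_trans/(_ (uc n)); rewrite ltxx.
Qed.

Section ComplexNormedSpace.
Variables (R : realType) (V : completeNormedModType (complex R)).
Local Notation C := (complex R).
Local Notation half := ((2%:R)^-1 : C).

Lemma half_ge0 : 0 <= half. Proof. by rewrite invr_ge0 ler0n. Qed.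
Lemma norm_half : `|half| = half. Proof. by rewrite ger0_norm // half_ge0. Qed.
Lemma conjc_half : (half^*)%C = half. Proof. by rewrite conjc_inv conjc_nat. Qed.
Lemma realc_half (x : R) : (x / 2)%:C = x%:C * half.
Proof. by rewrite rmorphM /= fmorphV /= rmorph_nat. Qed.
Lemma half_add (y : C) : half * (y + y) = y.
Proof.
rewrite (_ : y + y = 2%:R * y); last by rewrite mulr_natl mulr2n.
by rewrite mulrA mulVf ?mul1r // pnatr_eq0.
Qed.
Lemma scale_half_mulrn2 (x : V) : half *: (x *+ 2) = x.
Proof. by rewrite -[x *+ 2]scaler_nat scalerA mulVf ?scale1r // pnatr_eq0. Qed.

Lemma ge0_complexE (z : C) : 0 <= z -> z = (complex.Re z)%:C.
Proof. by move=> /ger0_Im; case: z => a b /= ->. Qed.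

Lemma ge0_conjc (z : C) : 0 <= z -> (z^*)%C = z.
Proof. by move=> /ge0_complexE ->; exact: conjc_real. Qed.

Lemma telescope_series (W : zmodType) (w : nat -> W) :
  series (fun k => w k.+1 - w k) = (fun n => w n - w 0%N).
Proof. by apply/funext => n; rewrite /series /= telescope_sumr. Qed.

Lemma cvgn_dominated_increments (u : nat -> V) (r : nat -> R) (B : R) :
  (forall n, r n <= B) -> (forall n, `|u n.+1 - u n| <= (r n.+1 - r n)%:C) ->
  cvgn u.
Proof.
move=> r_ub du.
have r_nd : nondecreasing_seq r.
  apply/nondecreasing_seqP => n; rewrite -subr_ge0 -ler0c.
  exact: le_trans (normr_ge0 _) (du n).
have /cauchy_cvgP/cauchy_seriesP r_cauchy : cvgn (series (fun k => r k.+1 - r k)).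
  rewrite telescope_series; apply: is_cvgB; last exact: is_cvg_cst.
  by apply: nondecreasing_is_cvgn => //; exists B => _ [n _ <-].
have -> : u = cst (u 0%N) + (fun n => u n - u 0%N).
  by apply/funext => n /=; rewrite addrC subrK.
apply: is_cvgD; first exact: is_cvg_cst.
rewrite -telescope_series; apply/cauchy_cvgP/cauchy_seriesP => e e_gt0.
have e_real := ge0_complexE (ltW e_gt0).
have eR_gt0 : 0 < complex.Re e by rewrite -ltcR -e_real.
rewrite e_real.
apply: filterS (r_cauchy _ eR_gt0) => -[m n] /= r_mn.
apply: le_lt_trans (ler_norm_sum _ _ _) _.
apply: le_lt_trans (ler_sum _ (fun k _ => du k)) _.
by rewrite -rmorph_sum ltcR; apply: le_lt_trans r_mn; exact: ler_norm.
Qed.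

End ComplexNormedSpace.

Section CstarAlgebra.
Variables (R : realType) (A : completeNormedModType (complex R)).
Variables (mul : A -> A -> A) (star : A -> A).
Hypothesis HA : is_cstar_algebra mul star.
Local Notation C := (complex R).
Local Notation "a ∗ b" := (mul a b) (at level 40, left associativity).
Local Notation half := ((2%:R)^-1 : C).

Lemma amulA x y z : x ∗ (y ∗ z) = x ∗ y ∗ z. Proof. exact: (cs_mulA HA). Qed.
Lemma amulDl x y z : (x + y) ∗ z = x ∗ z + y ∗ z. Proof. exact: (cs_mulDl HA). Qed.
Lemma amulDr x y z : x ∗ (y + z) = x ∗ y + x ∗ z. Proof. exact: (cs_mulDr HA). Qed.
Lemma amulZl (a : C) x y : (a *: x) ∗ y = a *: (x ∗ y). Proof. exact: (cs_mulZl HA). Qed.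
Lemma amulZr (a : C) x y : x ∗ (a *: y) = a *: (x ∗ y). Proof. exact: (cs_mulZr HA). Qed.
Lemma norm_amul x y : `|x ∗ y| <= `|x| * `|y|. Proof. exact: (cs_norm_mul HA). Qed.
Lemma starK x : star (star x) = x. Proof. exact: (cs_starK HA). Qed.
Lemma starD x y : star (x + y) = star x + star y. Proof. exact: (cs_starD HA). Qed.
Lemma starZ (a : C) x : star (a *: x) = (a^*)%C *: star x. Proof. exact: (cs_starZ HA). Qed.
Lemma starM x y : star (x ∗ y) = star y ∗ star x. Proof. exact: (cs_starM HA). Qed.
Lemma norm_cstar x : `|star x ∗ x| = `|x| ^+ 2. Proof. exact: (cs_cstar HA). Qed.

Lemma amul0l x : 0 ∗ x = 0.
Proof. by apply: (@addrI _ (0 ∗ x)); rewrite -amulDl !addr0. Qed.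
Lemma amul0r x : x ∗ 0 = 0.
Proof. by apply: (@addrI _ (x ∗ 0)); rewrite -amulDr !addr0. Qed.
Lemma amulNl x y : (- x) ∗ y = - (x ∗ y).
Proof. by apply: (@addrI _ (x ∗ y)); rewrite -amulDl !subrr amul0l. Qed.
Lemma amulNr x y : x ∗ (- y) = - (x ∗ y).
Proof. by apply: (@addrI _ (x ∗ y)); rewrite -amulDr !subrr amul0r. Qed.
Lemma amulBl x y z : (x - y) ∗ z = x ∗ z - y ∗ z. Proof. by rewrite amulDl amulNl. Qed.
Lemma amulBr x y z : x ∗ (y - z) = x ∗ y - x ∗ z. Proof. by rewrite amulDr amulNr. Qed.
Lemma amulMnl x y n : (x *+ n) ∗ y = (x ∗ y) *+ n.
Proof. by elim: n => [|n IHn]; rewrite ?amul0l // !mulrS amulDl IHn. Qed.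
Lemma amulMnr x y n : x ∗ (y *+ n) = (x ∗ y) *+ n.
Proof. by elim: n => [|n IHn]; rewrite ?amul0r // !mulrS amulDr IHn. Qed.

Lemma star0 : star 0 = 0.
Proof. by apply: (@addrI _ (star 0)); rewrite -starD !addr0. Qed.
Lemma starN x : star (- x) = - star x.
Proof. by apply: (@addrI _ (star x)); rewrite -starD !subrr star0. Qed.
Lemma starB x y : star (x - y) = star x - star y. Proof. by rewrite starD starN. Qed.
Lemma starMn x n : star (x *+ n) = star x *+ n.
Proof. by elim: n => [|n IHn]; rewrite ?star0 // !mulrS starD IHn. Qed.

Lemma norm_star x : `|star x| = `|x|.
Proof.
suff le_star y : `|y| <= `|star y|.
  by apply/le_anti; rewrite le_star -{2}(starK x) le_star.
have [->|y_neq0] := eqVneq y 0; first by rewrite normr0.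
have : `|y| ^+ 2 <= `|star y| * `|y| by rewrite -norm_cstar norm_amul.
by rewrite expr2 ler_pM2r // normr_gt0.
Qed.

Lemma norm_sqr_self_adjoint x : star x = x -> `|x ∗ x| = `|x| ^+ 2.
Proof. by move=> x_sa; rewrite -{1}x_sa norm_cstar. Qed.

Lemma cvg_star {T} {F : set_system T} {FF : Filter F} (u : T -> A) a :
  u @ F --> a -> (fun t => star (u t)) @ F --> star a.
Proof.
move=> ua; apply: (cvg_dist_dominated ler01 ua); apply: nearW => t.
by rewrite -starB norm_star mul1r.
Qed.

Lemma cvg_amul {T} {F : set_system T} {FF : Filter F} (u w : T -> A) a b :
  u @ F --> a -> w @ F --> b -> (fun t => u t ∗ w t) @ F --> a ∗ b.
Proof.
move=> ua wb.
have -> : (fun t => u t ∗ w t) = (fun t => u t ∗ b + u t ∗ (w t - b)).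
  by apply/funext => t; rewrite amulBr addrC subrK.
rewrite -[a ∗ b]addr0; apply: cvgD.
  apply: (cvg_dist_dominated (normr_ge0 b) ua); apply: nearW => t.
  by rewrite -amulBl mulrC norm_amul.
have a1_ge0 : 0 <= `|a| + 1 by rewrite addr_ge0.
apply: (cvg_dist_dominated a1_ge0 wb); near=> t.
rewrite sub0r normrN distrC; apply: le_trans (norm_amul _ _) _.
rewrite ler_wpM2r //; near: t; apply: (cvgr_norm_le _ ua).
by rewrite ltrDl ltr01.
Unshelve. all: by end_near.
Qed.

Lemma amul_fixed_closed_right_ideal e : closed_right_ideal mul [set z | e ∗ z = z].
Proof.
split; last first.
  have -> : [set z | e ∗ z = z] = (fun z => e ∗ z - z) @^-1` [set 0].
    apply/funext => z /=; apply/propext; split => [->|/eqP]; first exact: subrr.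
    by rewrite subr_eq0 => /eqP.
  apply: preimage_closed; last first.
    exact: (accessible_closed_set1 (hausdorff_accessible (@norm_hausdorff _ A))).
  move=> z _; apply: cvgB; last exact: cvg_id.
  by apply: cvg_amul; [exact: cvg_cst | exact: cvg_id].
split; [|split; [|split]] => /=.
- exact: amul0r.
- by move=> x y ex ey; rewrite amulDr ex ey.
- by move=> c x ex; rewrite amulZr ex.
- by move=> x y ex; rewrite amulA ex.
Qed.

Section OneSubSqrt.
Variables (f w : A) (B : R).
Hypotheses (B_ge0 : 0 <= B) (norm_w : `|w| <= B%:C) (norm_fw : `|f ∗ w| <= 1).
Local Notation v := (f ∗ w).

(* [E n] follows E |-> (v + E E) / 2 from 0, towards 1 - sqrt(1 - v) in the
   unitization; iterating on the right factor keeps it in f A. *)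
Fixpoint sqrt_seq n :=
  if n is n.+1 then half *: (w + sqrt_seq n ∗ (f ∗ sqrt_seq n)) else 0.
Local Notation E n := (f ∗ sqrt_seq n).

(* The same iteration for the scalar [v = 1]; it bounds [E n] and its increments. *)
Fixpoint iter1 n : R := if n is n.+1 then (1 + iter1 n ^+ 2) / 2 else 0.
Fixpoint iter_majorant n : R :=
  if n is n.+1 then B / 2 + (B * iter1 n + iter_majorant n) / 2 else 0.

Lemma iter1_ge0 n : 0 <= iter1 n.
Proof. by elim: n => //= n IHn; rewrite expr2; nra. Qed.

Lemma iter1_le1 n : iter1 n <= 1.
Proof.
elim: n => [|n IHn] /=; first lra.
by have := iter1_ge0 n; rewrite expr2 => ?; nra.
Qed.

Lemma iter1_le1c n : (iter1 n)%:C <= 1.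
Proof. by rewrite -[1 : C]/(1%:C) lecR iter1_le1. Qed.

Lemma iter_majorant_le n : iter_majorant n <= 2 * B.
Proof.
elim: n => [|n IHn] /=; first by rewrite mulr_ge0.
have : B * iter1 n <= B by rewrite -[leRHS]mulr1 ler_wpM2l ?iter1_le1.
lra.
Qed.

Lemma amul_sqrt_seqS n : E n.+1 = half *: (v + E n ∗ E n).
Proof. by rewrite /= amulZr amulDr !amulA. Qed.

Lemma norm_amul_sqrt_seq_le n : `|E n| <= (iter1 n)%:C.
Proof.
elim: n => [|n IHn]; first by rewrite amul0r normr0.
rewrite amul_sqrt_seqS normrZ norm_half /= realc_half mulrC ler_wpM2r ?half_ge0 //.
rewrite rmorphD rmorphXn /= rmorph1; apply: le_trans (ler_normD _ _) _.
apply: lerD => //; apply: le_trans (norm_amul _ _) _.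
by rewrite expr2; apply: ler_pM.
Qed.

Lemma norm_amul_sqrt_seq_incr n : `|E n.+1 - E n| <= (iter1 n.+1 - iter1 n)%:C.
Proof.
elim: n => [|n IHn].
  rewrite amul_sqrt_seqS amul0r amul0l subr0 addr0 normrZ norm_half /=.
  have -> : ((1 + 0 ^+ 2) / 2 - 0 : R) = 1 / 2 by ring.
  by rewrite realc_half rmorph1 mul1r ler_piMr ?half_ge0.
rewrite [E n.+2]amul_sqrt_seqS [E n.+1 in X in _ - X]amul_sqrt_seqS.
rewrite -scalerBr normrZ norm_half.
set X := E n.+1; set Y := E n.
have -> : v + X ∗ X - (v + Y ∗ Y) = X ∗ (X - Y) + (X - Y) ∗ Y.
  by rewrite amulBr amulBl addrA subrK opprD addrA [v + _]addrC addrK.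
have -> : iter1 n.+2 - iter1 n.+1 = (iter1 n.+1 + iter1 n) * (iter1 n.+1 - iter1 n) / 2.
  by rewrite /=; ring.
rewrite realc_half mulrC ler_wpM2r ?half_ge0 //.
apply: le_trans (ler_normD _ _) _.
rewrite rmorphM rmorphD /= mulrDl.
apply: lerD; apply: le_trans (norm_amul _ _) _.
  by apply: ler_pM => //; exact: norm_amul_sqrt_seq_le.
by rewrite mulrC; apply: ler_pM => //; exact: norm_amul_sqrt_seq_le.
Qed.

Lemma norm_sqrt_seq_le n : `|sqrt_seq n| <= B%:C.
Proof.
elim: n => [|n IHn]; first by rewrite normr0 ler0c.
rewrite /= normrZ norm_half -(half_add B%:C) ler_wpM2l ?half_ge0 //.
apply: le_trans (ler_normD _ _) _; apply: lerD => //.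
apply: le_trans (norm_amul _ _) _; rewrite -[X in _ <= X]mulr1.
by apply: ler_pM => //; apply: le_trans (norm_amul_sqrt_seq_le n) (iter1_le1c n).
Qed.

Lemma norm_sqrt_seq_incr n :
  `|sqrt_seq n.+1 - sqrt_seq n| <= (iter_majorant n.+1 - iter_majorant n)%:C.
Proof.
elim: n => [|n IHn].
  rewrite /= subr0 !amul0r addr0 normrZ norm_half mulr0 add0r mul0r addr0 subr0.
  by rewrite realc_half mulrC ler_wpM2r ?half_ge0.
rewrite [sqrt_seq n.+2]/= [sqrt_seq n.+1 in X in _ - X]/= -scalerBr normrZ norm_half.
set X := sqrt_seq n.+1; set Y := sqrt_seq n.
have -> : w + X ∗ (f ∗ X) - (w + Y ∗ (f ∗ Y)) =
    X ∗ (E n.+1 - E n) + (X - Y) ∗ E n.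
  by rewrite amulBr amulBl addrA subrK opprD addrA [w + _]addrC addrK.
have -> : iter_majorant n.+2 - iter_majorant n.+1 =
    (B * (iter1 n.+1 - iter1 n) + (iter_majorant n.+1 - iter_majorant n)) / 2.
  by rewrite /=; ring.
rewrite realc_half mulrC ler_wpM2r ?half_ge0 //.
apply: le_trans (ler_normD _ _) _; rewrite rmorphD rmorphM /=.
apply: lerD; apply: le_trans (norm_amul _ _) _.
  by apply: ler_pM => //; [exact: norm_sqrt_seq_le | exact: norm_amul_sqrt_seq_incr].
rewrite -[X in _ <= X]mulr1; apply: ler_pM => //.
exact: le_trans (norm_amul_sqrt_seq_le n) (iter1_le1c n).
Qed.

Lemma cvgn_sqrt_seq : cvgn sqrt_seq.
Proof.
exact: (cvgn_dominated_increments iter_majorant_le norm_sqrt_seq_incr).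
Qed.

Lemma one_sub_sqrt_lim : let G := limn sqrt_seq in
  [/\ f ∗ G = half *: (v + f ∗ G ∗ (f ∗ G)), `|f ∗ G| <= 1,
      (w ∗ f = f ∗ w -> G ∗ f = f ∗ G) & (star v = v -> star (f ∗ G) = f ∗ G)].
Proof.
move=> G; have G_lim : sqrt_seq @ \oo --> G := cvgn_sqrt_seq.
have E_lim : (fun n => E n) @ \oo --> f ∗ G by exact: cvg_amul (cvg_cst f) G_lim.
split.
- have ES_lim : (fun n => E n.+1) @ \oo --> f ∗ G.
    by have := E_lim; rewrite -cvg_shiftS.
  have : (fun n => E n.+1) @ \oo --> half *: (v + f ∗ G ∗ (f ∗ G)).
    rewrite (funext amul_sqrt_seqS).
    exact: cvgZ (cvg_cst _) (cvgD (cvg_cst _) (cvg_amul E_lim E_lim)).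
  exact: cvg_unique _ ES_lim.
- apply: (norm_cvgn_ub ler01 E_lim) => n.
  exact: le_trans (norm_amul_sqrt_seq_le n) (iter1_le1c n).
- move=> wf; have comm n : sqrt_seq n ∗ f = f ∗ sqrt_seq n.
    elim: n => [|n IHn] /=; first by rewrite amul0l amul0r.
    rewrite amulZl amulZr amulDl amulDr wf; congr (_ *: (_ + _)).
    by rewrite -!amulA IHn !amulA IHn.
  have : (fun n => sqrt_seq n ∗ f) @ \oo --> f ∗ G by rewrite (funext comm).
  exact: cvg_unique _ (cvg_amul G_lim (cvg_cst f)).
- move=> v_sa; have E_sa n : star (E n) = E n.
    elim: n => [|n IHn]; first by rewrite amul0r star0.
    by rewrite amul_sqrt_seqS starZ conjc_half starD v_sa starM IHn.
  have : (fun n => star (E n)) @ \oo --> f ∗ G by rewrite (funext E_sa).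
  exact: cvg_unique _ (cvg_star E_lim).
Qed.

End OneSubSqrt.

Lemma one_sub_sqrt_exists f w : `|f ∗ w| <= 1 ->
  exists2 E, exists G, E = f ∗ G &
  [/\ E = half *: (f ∗ w + E ∗ E), `|E| <= 1,
      (w ∗ f = f ∗ w -> E ∗ f = f ∗ E) & (star (f ∗ w) = f ∗ w -> star E = E)].
Proof.
move=> norm_fw; have B_ge0 : 0 <= complex.Re `|w|.
  by rewrite -ler0c -ge0_complexE.
have norm_w : `|w| <= (complex.Re `|w|)%:C by rewrite -ge0_complexE.
have [E_eq norm_E G_comm E_sa] := one_sub_sqrt_lim B_ge0 norm_w norm_fw.
exists (f ∗ limn (sqrt_seq f w)); first by eexists.
by split=> // wf; rewrite -amulA G_comm // amulA.
Qed.

Lemma half_fixpoint_sqr E v : E = half *: (v + E ∗ E) -> E ∗ E = E *+ 2 - v.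
Proof.
move=> E_eq; have -> : E *+ 2 = v + E ∗ E.
  by rewrite {1}E_eq scalerMnr scale_half_mulrn2.
by rewrite [v + _]addrC addrK.
Qed.

Lemma cstar_add_imaginary (s : C) b c : (s^*)%C = - s -> s * s = -1 ->
  star c ∗ b = star b ∗ c ->
  star (b + s *: c) ∗ (b + s *: c) = star b ∗ b + star c ∗ c.
Proof.
move=> s_imag s_sqr cb.
rewrite starD starZ s_imag scaleNr amulBl !amulDr !amulZr !amulZl.
by rewrite scalerA s_sqr scaleN1r cb opprD addrA addrK opprK.
Qed.

(* b is the mean of b + i c and b - i c, both of norm |a| by the C*-identity. *)
Lemma norm_le_of_cstar_sum a b c :
  star b ∗ b + star c ∗ c = star a ∗ a -> star c ∗ b = star b ∗ c -> `|b| <= `|a|.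
Proof.
move=> sum_eq cb.
have norm_add s : (s^*)%C = - s -> s * s = -1 -> `|b + s *: c| = `|a|.
  move=> s_imag s_sqr; apply/eqP; rewrite -(eqrXn2 (ltn0Sn 1)) ?normr_ge0 //.
  by rewrite -!norm_cstar cstar_add_imaginary // sum_eq.
have norm_add_i : `|b + 'i *: c| = `|a|.
  apply: norm_add; last by rewrite -expr2 sqr_i.
  by apply/eqP; rewrite eq_complex /= oppr0 !eqxx.
have norm_sub_i : `|b + (- 'i) *: c| = `|a|.
  apply: norm_add; last by rewrite mulrNN -expr2 sqr_i.
  by apply/eqP; rewrite eq_complex /= !oppr0 !opprK !eqxx.
have -> : b = half *: ((b + 'i *: c) + (b + (- 'i) *: c)).
  by rewrite scaleNr addrACA subrr addr0 scale_half_mulrn2.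
rewrite normrZ norm_half -[leRHS]half_add ler_wpM2l ?half_ge0 //.
by rewrite -{1}norm_add_i -norm_sub_i ler_normD.
Qed.

(* In the unitization P P + (2q - 1)(2q - 1) = 1: take b = P a, c = (2q - 1) a. *)
Lemma norm_amul_le_of_sqr_eq P q a : star P = P -> star q = q -> P ∗ q = q ∗ P ->
  P ∗ P = (q - q ∗ q) *+ 4 -> `|P ∗ a| <= `|a|.
Proof.
move=> P_sa q_sa Pq PP; set c := (q ∗ a) *+ 2 - a.
have starPa : star (P ∗ a) = star a ∗ P by rewrite starM P_sa.
have starc : star c = (star a ∗ q) *+ 2 - star a by rewrite starB starMn starM q_sa.
apply: (norm_le_of_cstar_sum (c := c)); rewrite starPa starc.
  rewrite amulA -[star a ∗ P ∗ P]amulA PP.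
  rewrite !(amulBl, amulBr, amulMnl, amulMnr) !amulA.
  move: (star a ∗ q ∗ a) (star a ∗ q ∗ q ∗ a) (star a ∗ a) => X Y Z.
  rewrite !mulrnBl -mulrnA; have -> : X *+ 4 = X *+ 2 + X *+ 2 by rewrite -mulrnDr.
  move: (X *+ 2) (Y *+ 4) => X2 Y4.
  by rewrite !addrA subrK addrK subKr.
rewrite !(amulBl, amulBr, amulMnl, amulMnr) !amulA.
by rewrite -[star a ∗ P ∗ q]amulA Pq !amulA.
Qed.

Lemma self_adjoint_norm_le1 P : star P = P -> `|P ∗ P| <= `|P| -> `|P| <= 1.
Proof.
move=> P_sa; rewrite norm_sqr_self_adjoint // expr2.
have [->|P_neq0] := eqVneq `|P| 0; first by rewrite ler01.
by rewrite -{3}[`|P|]mul1r ler_pM2r // lt_def P_neq0 normr_ge0.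
Qed.

Lemma commute_amul_sqr x h : x ∗ h = h ∗ x -> x ∗ (h ∗ h) = h ∗ h ∗ x.
Proof. by move=> xh; rewrite amulA xh -amulA xh amulA. Qed.

(* (p - p p) *+ 4 is the square of the contraction P = 2 h (1 - F), where
   F = 1 - sqrt(1 - p) and p = h h. *)
Lemma norm_sqr_sub_sqr_sqr_le1 h : star h = h -> `|h| <= 1 ->
  `|(h ∗ h - h ∗ h ∗ (h ∗ h)) *+ 4| <= 1.
Proof.
move=> h_sa norm_h; set p := h ∗ h.
have p_sa : star p = p by rewrite starM h_sa.
have norm_p : `|h ∗ h| <= 1 by rewrite norm_sqr_self_adjoint // expr_le1.
have [F _ [F_eq _ /(_ erefl) Fh /(_ p_sa) F_sa]] := one_sub_sqrt_exists norm_p.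
have FF : F ∗ F = F *+ 2 - p by exact: half_fixpoint_sqr F_eq.
set P := (h - h ∗ F) *+ 2.
have P_sa : star P = P by rewrite starMn starB starM F_sa h_sa Fh.
have PP : P ∗ P = (p - p ∗ p) *+ 4.
  rewrite amulMnl amulMnr -mulrnA; congr (_ *+ _).
  rewrite amulBl !amulBr -/p amulA -/p.
  have -> : h ∗ F ∗ h = p ∗ F by rewrite -amulA Fh amulA.
  have -> : h ∗ F ∗ (h ∗ F) = p ∗ (F ∗ F).
    by rewrite amulA -[h ∗ F ∗ h]amulA Fh amulA -amulA.
  rewrite FF amulBr amulMnr.
  by rewrite mulr2n opprB [p ∗ F + _ - _]addrAC addrK addrA subrK.
have Pp : P ∗ p = p ∗ P.
  by apply: commute_amul_sqr; rewrite amulMnl amulMnr amulBl amulBr -amulA Fh.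
have : `|P| <= 1.
  exact: self_adjoint_norm_le1 P_sa (norm_amul_le_of_sqr_eq _ P_sa p_sa Pp PP).
by rewrite -PP norm_sqr_self_adjoint // expr_le1.
Qed.

(* With p = h h and v = (p - p p) *+ 4, E = 1 - sqrt(1 - v) = 1 - |1 - 2p|, so
   e = p + E/2 = min(2p, 1) and z = 2p - E = 2 max(2p - 1, 0); z <> 0 since
   |2p| = 2 > |E|. *)
Lemma local_unit_exists h : star h = h -> `|h| = 1 ->
  exists e z, [/\ exists g, e = h ∗ g, e ∗ z = z & z <> 0].
Proof.
move=> h_sa norm_h; set p := h ∗ h.
have norm_p : `|p| = 1 by rewrite norm_sqr_self_adjoint // norm_h expr1n.
set w := (h - h ∗ p) *+ 4.
have hw : h ∗ w = (p - p ∗ p) *+ 4 by rewrite amulMnr amulBr amulA.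
have wh : w ∗ h = h ∗ w by rewrite amulMnl amulMnr amulBl amulBr /p !amulA.
have norm_hw : `|h ∗ w| <= 1.
  by rewrite hw; apply: norm_sqr_sub_sqr_sqr_le1; rewrite ?norm_h.
have [E [G E_hG] [E_eq norm_E /(_ wh) Eh _]] := one_sub_sqrt_exists norm_hw.
have Ep : E ∗ p = p ∗ E by exact: commute_amul_sqr.
have EE : E ∗ E = E *+ 2 - (p - p ∗ p) *+ 4.
  by rewrite -hw; exact: half_fixpoint_sqr E_eq.
exists (p + half *: E), (p *+ 2 - E); split.
- by exists (h + half *: G); rewrite amulDr amulZr -E_hG.
- rewrite amulDl amulZl !amulBr !amulMnr Ep EE scalerBr scale_half_mulrn2.
  rewrite scalerBr scale_half_mulrn2 -[4%N]/(2 * 2)%N mulrnA scale_half_mulrn2.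
  by rewrite addrA (subrK (p ∗ E)) mulrnBl opprB addrA subrKC.
- move=> /eqP; rewrite subr_eq0 => /eqP E_eq2p.
  by move: norm_E; rewrite -E_eq2p normrMn norm_p -[1 : C]/(1%:R) ler_nat.
Qed.

Lemma normalized_self_adjoint_in_ideal I x : right_ideal mul I -> I x -> x <> 0 ->
  exists h, [/\ star h = h, `|h| = 1 & forall b, I (h ∗ b)].
Proof.
move=> [_ [_ [I_scale I_mul]]] Ix x_neq0; set y := x ∗ star x.
have norm_y : `|y| = `|x| ^+ 2 by rewrite /y -{1}[x]starK norm_cstar norm_star.
have y_neq0 : `|y| != 0 by rewrite norm_y expf_neq0 // normr_eq0; apply/eqP.
exists (`|y|^-1 *: y); split.
- by rewrite starZ ge0_conjc ?invr_ge0 // starM starK.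
- by rewrite normrZ ger0_norm ?invr_ge0 // mulVf.
- by move=> b; rewrite amulZl -amulA; apply/I_scale/I_mul.
Qed.

End CstarAlgebra.

Unset Implicit Arguments.

Theorem mainTheorem1 (R : realType) (A : completeNormedModType (complex R))
    (mul : A -> A -> A) (star : A -> A) (J : set A) :
  is_cstar_algebra mul star ->
  closed_right_ideal mul J ->
  topologically_essential mul J ->
  essential mul J.
Proof.
move=> HA _ J_te I I_ideal [x [Ix x_neq0]].
have [h [h_sa norm_h hI]] := normalized_self_adjoint_in_ideal HA I_ideal Ix x_neq0.
have [e [z [[g ->] ez z_neq0]]] := local_unit_exists HA h_sa norm_h.
have [y [Jy [hgy y_neq0]]] :=
  J_te _ (amul_fixed_closed_right_ideal HA (mul h g)) (ex_intro _ z (conj ez z_neq0)).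
exists y; split => //; split => //.
by rewrite -hgy -(amulA HA); exact: hI.
Qed.
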